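(* Let $(X_1,Y_1),\dots,(X_k,Y_k)$ be i.i.d. random vectors in $\mathbb R^2$ whose common density $f$ satisfies $f\in L_\infty(\mathbb R^2)$, $\|f\|_{L_\infty(\mathbb R^2)}\le C_0$, and $f=0$ outside the disk $B((0,0),R)$, where $R,C_0>0$. For $(x,y)\in B((0,0),R)$ let $Z(x,y)=\min_{1\le j\le k}\sqrt{(X_j-x)^2+(Y_j-y)^2}$. Then $$\min_{(x,y)\in B((0,0),R)}\mathbf E\big(Z(x,y)\big)\ge\frac{1}{4\pi RC_0(k+1)}.$$
   Context: $B((0,0),R)$ denotes the closed Euclidean disk of radius $R$ centered at the origin. *)

From HB Require Import structures.
From mathcomp Require Import all_boot all_order all_algebra.
From mathcomp Require Import all_classical all_reals all_analysis.
Set Implicit Arguments. Unset Strict Implicit. Unset Printing Implicit Defensive.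
Import Order.TTheory GRing.Theory Num.Theory.
Local Open Scope classical_set_scope.
Local Open Scope ring_scope.

Definition leb2 (R : realType) : set (R * R) -> \bar R :=
  product_measure1 (@lebesgue_measure R) (@lebesgue_measure R).

Definition disk (R : realType) (rad : R) : set (R * R) :=
  [set p | p.1 ^+ 2 + p.2 ^+ 2 <= rad ^+ 2].

Definition rvec (T : Type) (R : realType) (k : nat)
  (X Y : 'I_k -> T -> R) (j : 'I_k) : T -> R * R :=
  fun w => (X j w, Y j w).

(* mutual independence of the random vectors V_j (j < k):
   product rule for every family of measurable sets (taking A_j = setT
   yields the product rule for every subfamily). *)
Definition mutually_independent (d : measure_display) (T : measurableType d)
  (R : realType) (P : probability T R) (k : nat) (V : 'I_k -> T -> R * R) :=
  forall A : 'I_k -> set (R * R), (forall j, measurable (A j)) ->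
    P (\bigcap_(j in [set: 'I_k]) (V j @^-1` A j)) =
    (\prod_(j < k) P (V j @^-1` A j))%E.

Definition has_density (d : measure_display) (T : measurableType d)
  (R : realType) (P : probability T R) (V : T -> R * R) (f : R * R -> R) :=
  forall A : set (R * R), measurable A ->
    P (V @^-1` A) = (\int[@leb2 R]_(p in A) (f p)%:E)%E.

Definition Zdist (T : Type) (R : realType) (k : nat) (X Y : 'I_k -> T -> R)
  (x y : R) : T -> \bar R :=
  fun w => (\big[Order.min/+oo%E]_(j < k)
              (Num.sqrt ((X j w - x) ^+ 2 + (Y j w - y) ^+ 2))%:E)%E.

From HB Require Import structures.
From mathcomp Require Import all_boot all_order all_algebra.
From mathcomp Require Import all_classical all_reals all_analysis.
From mathcomp Require Import measurable_realfun.
From mathcomp Require Import ring lra.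
Set Implicit Arguments. Unset Strict Implicit. Unset Printing Implicit Defensive.
Import Order.TTheory GRing.Theory Num.Theory.
Local Open Scope classical_set_scope.
Local Open Scope ring_scope.

(* Let b be the claimed bound and t := 2b.  If no sample lies in the square of
   half-side t around (x, y), then Z(x, y) >= t.  By the union bound and the
   density bound, the sample meets that square with probability at most
   k C_0 (2t)^2.  The density has mass 1 on the square of half-side R around
   the origin, so C_0 (2R)^2 >= 1; with pi >= 2 this makes the probability at
   most 1/2, whence E Z >= t/2 = b. *)

(* [leb2] is a bare function; equip it with the measure structure of the
   product of the two Lebesgue measures. *)
Section leb2_measure.
Variable R : realType.

Let lebesgue_measure2 := @product_measure1 _ _ (measurableTypeR R)
  (measurableTypeR R) R lebesgue_measure lebesgue_measure.

HB.instance Definition _ := isMeasure.Build _ (R * R)%type R (@leb2 R)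
  (measure0 lebesgue_measure2) (measure_ge0 lebesgue_measure2)
  (@measure_semi_sigma_additive _ _ _ lebesgue_measure2).

End leb2_measure.

Section measure_integral_bounds.
Local Open Scope ereal_scope.

Lemma measure_bigsetU_ord_le d (T : ringOfSetsType d) (R : realFieldType)
  (mu : {content set T -> \bar R}) k (A : 'I_k -> set T) :
  (forall j, measurable (A j)) ->
  mu (\big[setU/set0]_(j < k) A j) <= \sum_(j < k) mu (A j).
Proof.
move=> mA; pose B i := if insub i is Some j then A j else set0.
have BE (j : 'I_k) : A j = B j by rewrite /B valK.
rewrite (eq_bigr _ (fun j _ => BE j)).
rewrite [leRHS](eq_bigr _ (fun j _ => congr1 mu (BE j))).
by apply: Boole_inequality => i ik; rewrite /B insubT.
Qed.

Lemma integral_le_ae_bound d (T : measurableType d) (R : realType)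
  (mu : {measure set T -> \bar R}) (f : T -> R) (C : R) (S : set T) :
  (0 <= C)%R -> measurable S -> measurable_fun setT f ->
  {ae mu, forall p, (`|f p| <= C)%R} ->
  \int[mu]_(p in S) (f p)%:E <= C%:E * mu S.
Proof.
move=> C_ge0 mS mf f_le; rewrite integralE.
have mfS : measurable_fun S (fun p => (f p)%:E).
  by apply/measurable_EFinP; exact: measurable_funS mf.
apply: (@le_trans _ _ (\int[mu]_(p in S) ((fun p => (f p)%:E) ^\+ p))).
  rewrite -[leRHS]sube0; apply: leeB => //.
  by apply: integral_ge0 => p _; exact: funeneg_ge0.
rewrite -integral_cst //; apply: ae_ge0_le_integral => //; first exact: measurable_funepos.
apply: filterS f_le => p fp _ /=.
rewrite funeposE ge_max /= !lee_fin C_ge0 andbT.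
exact: le_trans (ler_norm _) fp.
Qed.

(* The integral of a nonnegative function is a supremum over the simple
   functions below it, so monotonicity needs no measurability. *)
Lemma ge0_le_integral_nonmeasurable d (T : measurableType d) (R : realType)
  (mu : {measure set T -> \bar R}) (f g : T -> \bar R) :
  (forall x, 0 <= f x) -> (forall x, f x <= g x) ->
  \int[mu]_x f x <= \int[mu]_x g x.
Proof.
move=> f_ge0 fg.
have g_ge0 x : 0 <= g x by exact: le_trans (f_ge0 x) (fg x).
rewrite !ge0_integralE //.
apply: ereal_sup_le => _ [h hf <-]; exists h => //= x.
by apply: le_trans (hf x) _; rewrite /patch /=; case: ifP.
Qed.

End measure_integral_bounds.

Definition square (R : realType) (x y t : R) : set (R * R) :=
  `[x - t, x + t]%classic `*` `[y - t, y + t]%classic.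

Lemma measurable_square (R : realType) (x y t : R) : measurable (square x y t).
Proof. by apply: measurableX; exact: measurable_itv. Qed.

Lemma leb2_square (R : realType) (x y t : R) : 0 < t ->
  @leb2 R (square x y t) = ((2 * t) ^+ 2)%:E.
Proof.
move=> t_gt0.
have len (u : R) : @lebesgue_measure R
    (`[u - t, u + t]%classic : set (measurableTypeR R)) = (2 * t)%:E.
  rewrite lebesgue_measure_itv /= lte_fin ltrBlDr -addrA ltrDl addr_gt0 //.
  by congr EFin; ring.
have := product_measure1E (@lebesgue_measure R) (@lebesgue_measure R)
  (measurable_itv `[x - t, x + t]) (measurable_itv `[y - t, y + t]).
rewrite /leb2 /square => ->; rewrite expr2 EFinM.
by congr (_ * _)%E; exact: len.
Qed.

Lemma disk_sub_square (R : realType) (rad : R) : 0 <= rad ->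
  disk rad `<=` square 0 0 rad.
Proof.
move=> rad_ge0 p; rewrite /disk /square /= !in_itv /= !sub0r !add0r => p_in.
by split; apply/andP; split; nra.
Qed.

Section density_bounds.
Context d (T : measurableType d) (R : realType) (P : probability T R).
Variables (V : T -> R * R) (f : R * R -> R) (C : R).
Hypotheses (mV : measurable_fun setT V) (mf : measurable_fun setT f).
Hypotheses (C_ge0 : 0 <= C) (f_le : {ae @leb2 R, forall p, `|f p| <= C}).
Hypothesis V_density : has_density P V f.

Lemma prob_le_density_bound (A : set (R * R)) : measurable A ->
  (P (V @^-1` A) <= C%:E * @leb2 R A)%E.
Proof. by move=> mA; rewrite V_density //; exact: integral_le_ae_bound. Qed.

Lemma prob_square_le (x y t : R) : 0 < t ->
  (P (V @^-1` square x y t) <= (C * (2 * t) ^+ 2)%:E)%E.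
Proof.
move=> t_gt0; rewrite EFinM -(leb2_square x y t_gt0).
exact: prob_le_density_bound (measurable_square x y t).
Qed.

Lemma density_bound_mass (rad : R) : 0 < rad ->
  (forall p, ~ disk rad p -> f p = 0) -> 1 <= C * (2 * rad) ^+ 2.
Proof.
move=> rad_gt0 f_disk; rewrite -lee_fin.
have mS := measurable_square 0 0 rad.
have mVS : measurable (V @^-1` square 0 0 rad) by rewrite -[_ @^-1` _]setTI; exact: mV.
have out0 : P (V @^-1` ~` square 0 0 rad) = 0%E.
  rewrite V_density; last exact: measurableC.
  apply: integral0_eq => p p_out.
  by rewrite f_disk // => /(disk_sub_square (ltW rad_gt0)).
have <- : P (V @^-1` square 0 0 rad) = 1%E.
  rewrite -[V @^-1` _]setCK probability_setC; last exact: measurableC.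
  by rewrite preimage_setC out0 sube0.
exact: prob_square_le.
Qed.

End density_bounds.

Section nearest_distance.
Context (T : Type) (R : realType) (k : nat) (X Y : 'I_k -> T -> R).

Lemma Zdist_ge0 x y w : (0 <= Zdist X Y x y w)%E.
Proof.
rewrite /Zdist; elim/big_ind: _ => // a b a_ge0 b_ge0.
by rewrite le_min a_ge0 b_ge0.
Qed.

Lemma Zdist_ge_off_square x y t w : 0 <= t ->
  (forall j, ~ square x y t (rvec X Y j w)) -> (t%:E <= Zdist X Y x y w)%E.
Proof.
move=> t_ge0 off; rewrite /Zdist; elim/big_ind: _ => //; first exact: leey.
  by move=> a b ta tb; rewrite le_min ta tb.
move=> j _.
rewrite lee_fin -(ger0_norm t_ge0) -sqrtr_sqr ler_sqrt; last first.
  by rewrite addr_ge0 // sqr_ge0.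
have {off} : ~~ ((x - t <= X j w <= x + t) && (y - t <= Y j w <= y + t)).
  by apply/negP => /andP[Xj Yj]; apply: (off j); rewrite /square /= !in_itv.
rewrite negb_and !negb_and -!ltNge.
have := sqr_ge0 (X j w - x); have := sqr_ge0 (Y j w - y).
by move=> ? ? /orP[/orP[]|/orP[]] ?; rewrite !expr2; nra.
Qed.

End nearest_distance.

Section samples_near_point.
Context d (T : measurableType d) (R : realType) (P : probability T R).
Variables (k : nat) (X Y : 'I_k -> T -> R).
Hypothesis mV : forall j, measurable_fun setT (rvec X Y j).

Definition some_in_square (x y t : R) : set T :=
  \big[setU/set0]_(j < k) (rvec X Y j @^-1` square x y t).

Lemma measurable_some_in_square x y t : measurable (some_in_square x y t).
Proof.
apply: bigsetU_measurable => j _; rewrite -[_ @^-1` _]setTI.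
exact: mV (measurable_square _ _ _).
Qed.

Lemma prob_some_in_square_le (f : R * R -> R) (C x y t : R) :
  measurable_fun setT f -> 0 <= C -> {ae @leb2 R, forall p, `|f p| <= C} ->
  (forall j, has_density P (rvec X Y j) f) -> 0 < t ->
  (P (some_in_square x y t) <= (k%:R * (C * (2 * t) ^+ 2))%:E)%E.
Proof.
move=> mf C_ge0 f_le V_density t_gt0.
apply: le_trans (measure_bigsetU_ord_le _ _) _ => [j|].
  by rewrite -[_ @^-1` _]setTI; exact: mV (measurable_square _ _ _).
apply: (@le_trans _ _ (\sum_(j < k) (C * (2 * t) ^+ 2)%:E)%E).
  by apply: lee_sum => j _; exact: (prob_square_le mf C_ge0 f_le (V_density j)).
by rewrite sumr_const card_ord [in leRHS]mulr_natl EFin_natmul.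
Qed.

Lemma expectation_Zdist_ge (x y t : R) : 0 <= t ->
  ((t * (1 - fine (P (some_in_square x y t))))%:E
    <= \int[P]_w Zdist X Y x y w)%E.
Proof.
move=> t_ge0; have mE := measurable_some_in_square x y t.
apply: (@le_trans _ _ (\int[P]_w ((cst t%:E) \_ (~` some_in_square x y t)) w)%E).
  rewrite -integral_mkcond integral_cst; last exact: measurableC.
  rewrite [X in (_ <= _ * X)%E](_ : _ = (1 - fine (P (some_in_square x y t)))%:E) //.
  apply: eq_trans (probability_setC P mE) _.
  by rewrite EFinB fineK ?fin_num_measure.
apply: ge0_le_integral_nonmeasurable => w; rewrite /patch.
  by case: ifP => _ //; rewrite lee_fin.
case: ifP => [/set_mem off|_]; last exact: Zdist_ge0.
apply: Zdist_ge_off_square t_ge0 _ => j in_j; apply: off.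
by rewrite /some_in_square (bigD1 j) //=; left.
Qed.

End samples_near_point.

Lemma hitting_mass_le_half (R : realType) (p r C n : R) :
  2 <= p -> 0 < r -> 0 <= n -> 1 <= C * (2 * r) ^+ 2 ->
  n * (C * (2 * (2 * (4 * p * r * C * (n + 1))^-1)) ^+ 2) <= 2^-1.
Proof.
move=> p_ge2 r_gt0 n_ge0 mass.
have C_gt0 : 0 < C by nra.
set u := p * r * C * (n + 1).
have u_gt0 : 0 < u by rewrite /u !mulr_gt0 //; lra.
rewrite mulrA.
have -> : 2 * (2 * (4 * p * r * C * (n + 1))^-1) = u^-1.
  by rewrite /u; field; apply/and4P; split; apply: lt0r_neq0; lra.
rewrite expr2 -invfM ler_pdivrMr; last exact: mulr_gt0.
have pr : 1 <= p ^+ 2 * (r ^+ 2 * C) by nra.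
have -> : u * u = C * (p ^+ 2 * (r ^+ 2 * C)) * (n + 1) ^+ 2 by rewrite /u; ring.
have : 2 * n <= p ^+ 2 * (r ^+ 2 * C) * (n + 1) ^+ 2 by nra.
nra.
Qed.

Theorem mainTheorem13 (R : realType) (d : measure_display) (T : measurableType d)
  (P : probability T R) (k : nat) (X Y : 'I_k -> T -> R)
  (f : R * R -> R) (rad C0 : R) :
  (0 < k)%N -> 0 < rad -> 0 < C0 ->
  (forall j, measurable_fun setT (X j)) ->
  (forall j, measurable_fun setT (Y j)) ->
  measurable_fun setT f ->
  {ae @leb2 R, forall p, `|f p| <= C0} ->
  (forall p, ~ disk rad p -> f p = 0) ->
  (forall j, has_density P (rvec X Y j) f) ->
  mutually_independent P (rvec X Y) ->
  forall x y, disk rad (x, y) ->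
    (((4 * pi * rad * C0 * (k.+1)%:R)^-1)%:E <= \int[P]_w Zdist X Y x y w)%E.
Proof.
move=> k_gt0 rad_gt0 C0_gt0 mX mY mf f_le f_disk V_density _ x y _.
have mV j : measurable_fun setT (rvec X Y j) := measurable_fun_pair (mX j) (mY j).
set b := (4 * pi * rad * C0 * k.+1%:R)^-1.
have b_gt0 : 0 < b by rewrite invr_gt0 !mulr_gt0 // pi_gt0.
have t_gt0 : 0 < 2 * b by rewrite mulr_gt0.
have mass := density_bound_mass (mV (Ordinal k_gt0)) mf (ltW C0_gt0) f_le
  (V_density _) rad_gt0 f_disk.
have P_le := prob_some_in_square_le mV x y mf (ltW C0_gt0) f_le V_density t_gt0.
have half : k%:R * (C0 * (2 * (2 * b)) ^+ 2) <= 2^-1.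
  by rewrite /b -[k.+1%:R]natr1 hitting_mass_le_half // pi_ge2.
have P_half : fine (P (some_in_square X Y x y (2 * b))) <= 2^-1.
  rewrite -lee_fin fineK; first by apply: le_trans P_le _; rewrite lee_fin.
  exact/fin_num_measure/measurable_some_in_square.
apply: le_trans (expectation_Zdist_ge P mV x y (ltW t_gt0)); rewrite lee_fin.
nra.
Qed.
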